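(* Let $d\ge2$, let $G$ be a germ and let $\mathcal{Q}_G$ be the (nonempty) set of all qplexes containing $G$. Define the stem $\mathscr{S}(G)=\bigcap_{Q\in\mathcal{Q}_G}Q$ and envelope $\mathscr{E}(G)=\bigcup_{Q\in\mathcal{Q}_G}Q$. Then $$\mathscr{S}(G)=\overline{\mathrm{conv}}(\Delta_{\rm e}\cup B_{\rm i}\cup G),\qquad \mathscr{E}(G)=\Delta\cap B_{\rm o}\cap G^*,$$ and $\mathscr{S}(G)$ and $\mathscr{E}(G)$ are mutually polar: $\mathscr{S}(G)^*=\mathscr{E}(G)$ and $\mathscr{E}(G)^*=\mathscr{S}(G)$. In particular (taking $G=\emptyset$) the intersection of all qplexes is $\overline{\mathrm{conv}}(\Delta_{\rm e}\cup B_{\rm i})$ and the union of all qplexes is $\Delta\cap B_{\rm o}$.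
   Context: Fix an integer $d\ge 2$. $\langle\cdot,\cdot\rangle$ is the standard inner product on $\mathbb{R}^{d^2}$, $\|\cdot\|$ the Euclidean norm. $\Delta=\{p\in\mathbb{R}^{d^2}: p(i)\ge0,\ \sum_ip(i)=1\}$; $H=\{u\in\mathbb{R}^{d^2}:\sum_i u(i)=1\}$; $c=(1/d^2,\dots,1/d^2)$. $\overline{\mathrm{conv}}(X)$ denotes the closed convex hull. For $A\subseteq H$ the polar is $A^*=\{u\in H:\langle u,v\rangle\ge\frac{1}{d(d+1)}\ \forall v\in A\}$. Out-ball: $B_{\rm o}=\{u\in H:\|u-c\|\le r_{\rm o}\}$, $r_{\rm o}^2=\frac{d-1}{d^2(d+1)}$. In-ball: $B_{\rm i}=\{u\in H:\|u-c\|\le r_{\rm i}\}$, $r_{\rm i}^2=\frac{1}{d^2(d^2-1)}$. Basis distributions: $e_k(i)=\frac{1}{d+1}(\delta_{ki}+\frac1d)$, $k=1,\dots,d^2$; basis simplex $\Delta_{\rm e}=\mathrm{conv}\{e_1,\dots,e_{d^2}\}$. A subset $A\subseteq\Delta$ is a germ if $\frac{1}{d(d+1)}\le\langle p,s\rangle\le\frac{2}{d(d+1)}$ for all $p,s\in A$. A qplex is a set $Q\subseteq\Delta\cap B_{\rm o}$ with $Q^*=Q$ (equivalently, a maximal germ). *)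

(* classical reals. Points of R^{d^2} are represented as
   functions nat -> R; only coordinates 0 .. d^2-1 are ever inspected. *)
From Stdlib Require Import Reals.
Open Scope R_scope.

Fixpoint sumN (n : nat) (f : nat -> R) : R :=
  match n with O => 0 | S m => sumN m f + f m end.

Definition vec := nat -> R.
Definition rset := vec -> Prop.

Section QDefs.
Variable d : nat.

Definition Ndim : nat := (d * d)%nat.
Definition dR : R := INR d.

Definition ip (u v : vec) : R := sumN Ndim (fun i => u i * v i).
Definition dist2 (u v : vec) : R := sumN Ndim (fun i => (u i - v i) ^ 2).

Definition inH (u : vec) : Prop := sumN Ndim u = 1.
Definition Simplex (u : vec) : Prop :=
  (forall i, (i < Ndim)%nat -> 0 <= u i) /\ inH u.
Definition cpt : vec := fun _ => 1 / (dR * dR).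

Definition ro2 : R := (dR - 1) / (dR * dR * (dR + 1)).
Definition ri2 : R := 1 / (dR * dR * (dR * dR - 1)).
Definition Bout (u : vec) : Prop := inH u /\ dist2 u cpt <= ro2.
Definition Bin (u : vec) : Prop := inH u /\ dist2 u cpt <= ri2.

Definition ebasis (k : nat) : vec :=
  fun i => / (dR + 1) * ((if Nat.eqb k i then 1 else 0) + / dR).
Definition isBasisVec (u : vec) : Prop :=
  exists k, (k < Ndim)%nat /\ forall i, (i < Ndim)%nat -> u i = ebasis k i.

Definition conv (A : rset) (u : vec) : Prop :=
  exists (n : nat) (x : nat -> vec) (lam : nat -> R),
    (forall j, (j < n)%nat -> A (x j) /\ 0 <= lam j) /\
    sumN n lam = 1 /\
    forall i, (i < Ndim)%nat -> u i = sumN n (fun j => lam j * x j i).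

Definition closure (A : rset) (u : vec) : Prop :=
  forall eps, 0 < eps -> exists v, A v /\ dist2 u v < eps.

Definition clconv (A : rset) : rset := closure (conv A).

Definition BasisSimplex : rset := conv isBasisVec.

Definition polar (A : rset) (u : vec) : Prop :=
  inH u /\ forall v, A v -> ip u v >= 1 / (dR * (dR + 1)).

Definition seteq (A B : rset) : Prop := forall u, A u <-> B u.
Definition subset (A B : rset) : Prop := forall u, A u -> B u.
Definition union (A B : rset) : rset := fun u => A u \/ B u.

Definition germ (A : rset) : Prop :=
  subset A Simplex /\
  forall p s, A p -> A s ->
    1 / (dR * (dR + 1)) <= ip p s /\ ip p s <= 2 / (dR * (dR + 1)).

Definition qplex (Q : rset) : Prop :=
  subset Q (fun u => Simplex u /\ Bout u) /\ seteq (polar Q) Q.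

Definition stem (G : rset) : rset :=
  fun u => forall Q, qplex Q -> subset G Q -> Q u.
Definition envelope (G : rset) : rset :=
  fun u => exists Q, qplex Q /\ subset G Q /\ Q u.

Definition emptyset : rset := fun _ => False.
End QDefs.

(* Qplexes are exactly the maximal germs, so by Zorn every germ G lies in a
   qplex, and a point p of Delta /\ B_o /\ G^* lies in one too, since G + p is
   still a germ; this describes the envelope.  The basis distributions and the
   in-ball pair to at least 1/(d(d+1)) with every point of Delta /\ B_o, and a
   qplex, being its own polar, is closed and convex: so every qplex containing G
   contains K = clconv(Delta_e \/ B_i \/ G).  Conversely, a point u outside K is
   cut off from K by a hyperplane through the centre c, which can be tilted into
   the polar hyperplane of some v; as v is polar to the e_k and to B_i it lies in
   Delta /\ B_o, hence in a qplex containing G, and that qplex misses u. *)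

From Stdlib Require Import Reals Lra Lia Psatz Classical FunctionalExtensionality PropExtensionality.
From mathcomp Require classical_sets.
Open Scope R_scope.

Lemma sumN_ext n f g : (forall i, (i < n)%nat -> f i = g i) -> sumN n f = sumN n g.
Proof.
induction n as [|n IH]; intros H; cbn [sumN]; auto.
rewrite IH by (intros; apply H; lia). rewrite H by lia. reflexivity.
Qed.

Lemma sumN_lin n a b f g :
  sumN n (fun i => a * f i + b * g i) = a * sumN n f + b * sumN n g.
Proof. induction n as [|n IH]; cbn [sumN]; [ring | rewrite IH; ring]. Qed.

Lemma sumN_scal n a f : sumN n (fun i => a * f i) = a * sumN n f.
Proof. induction n as [|n IH]; cbn [sumN]; [ring | rewrite IH; ring]. Qed.

Lemma sumN_plus n f g : sumN n (fun i => f i + g i) = sumN n f + sumN n g.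
Proof. induction n as [|n IH]; cbn [sumN]; [ring | rewrite IH; ring]. Qed.

Lemma sumN_minus n f g : sumN n (fun i => f i - g i) = sumN n f - sumN n g.
Proof. induction n as [|n IH]; cbn [sumN]; [ring | rewrite IH; ring]. Qed.

Lemma sumN_const n a : sumN n (fun _ => a) = INR n * a.
Proof. induction n as [|n IH]; cbn [sumN]; [simpl; ring | rewrite IH, S_INR; ring]. Qed.

Lemma sumN_le n f g : (forall i, (i < n)%nat -> f i <= g i) -> sumN n f <= sumN n g.
Proof.
induction n as [|n IH]; intros H; cbn [sumN]; [lra|].
apply Rplus_le_compat; [apply IH; intros | apply H]; auto; lia.
Qed.

Lemma sumN_nonneg n f : (forall i, (i < n)%nat -> 0 <= f i) -> 0 <= sumN n f.
Proof.
intros H. rewrite <- (Rmult_0_r (INR n)), <- sumN_const. apply sumN_le, H.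
Qed.

Lemma sumN_swap n m (f : nat -> nat -> R) :
  sumN n (fun i => sumN m (f i)) = sumN m (fun j => sumN n (fun i => f i j)).
Proof.
induction n as [|n IH]; cbn [sumN].
- rewrite sumN_const; simpl; ring.
- rewrite IH, <- sumN_plus. reflexivity.
Qed.

Lemma sumN_split n m f : sumN (n + m) f = sumN n f + sumN m (fun j => f (n + j)%nat).
Proof.
induction m as [|m IH]; cbn [sumN].
- rewrite Nat.add_0_r; ring.
- rewrite Nat.add_succ_r. cbn [sumN]. rewrite IH. ring.
Qed.

Lemma sumN_indicator n k f : (k < n)%nat ->
  sumN n (fun i => (if Nat.eqb k i then 1 else 0) * f i) = f k.
Proof.
induction n as [|n IH]; intros Hk; [lia|]. cbn [sumN].
destruct (Nat.eq_dec k n) as [->|Hne].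
- rewrite Nat.eqb_refl, (sumN_ext n _ (fun _ => 0)), sumN_const; [ring|].
  intros i Hi. replace (Nat.eqb n i) with false by (symmetry; apply Nat.eqb_neq; lia). ring.
- rewrite IH by lia. replace (Nat.eqb k n) with false by (symmetry; apply Nat.eqb_neq; lia). ring.
Qed.

Lemma sumN_sq_le_sq n f : (forall i, (i < n)%nat -> 0 <= f i) ->
  sumN n (fun i => f i ^ 2) <= sumN n f ^ 2.
Proof.
induction n as [|n IH]; intros H; cbn [sumN]; [lra|].
assert (0 <= f n) by (apply H; lia).
assert (0 <= sumN n f) by (apply sumN_nonneg; intros; apply H; lia).
assert (sumN n (fun i => f i ^ 2) <= sumN n f ^ 2) by (apply IH; intros; apply H; lia).
nra.
Qed.

Lemma discriminant_le A B C :
  0 <= C -> (forall l, 0 <= A - 2 * l * B + l ^ 2 * C) -> B ^ 2 <= A * C.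
Proof.
intros HC H. destruct (Rle_lt_dec C 0) as [HC0|HCp].
- assert (C = 0) by lra. subst C.
  destruct (Req_dec B 0) as [->|HB]; [nra|].
  specialize (H ((A + 1) / (2 * B))).
  replace (A - 2 * ((A + 1) / (2 * B)) * B + ((A + 1) / (2 * B)) ^ 2 * 0) with (-1) in H
    by (field; auto). lra.
- specialize (H (B / C)).
  replace (A - 2 * (B / C) * B + (B / C) ^ 2 * C) with ((A * C - B ^ 2) / C) in H by (field; lra).
  assert (0 <= A * C - B ^ 2); [|lra].
  apply (Rmult_le_reg_r (/ C)); [apply Rinv_0_lt_compat; lra | lra].
Qed.

Lemma sumN_cauchy_schwarz n a b :
  sumN n (fun i => a i * b i) ^ 2 <= sumN n (fun i => a i ^ 2) * sumN n (fun i => b i ^ 2).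
Proof.
apply discriminant_le; [apply sumN_nonneg; intros; apply pow2_ge_0|].
intros l.
replace (sumN n (fun i => a i ^ 2) - 2 * l * sumN n (fun i => a i * b i)
         + l ^ 2 * sumN n (fun i => b i ^ 2))
  with (sumN n (fun i => (a i - l * b i) ^ 2)).
- apply sumN_nonneg; intros; apply pow2_ge_0.
- induction n as [|n IH]; cbn [sumN]; [ring | rewrite IH; ring].
Qed.

Lemma sumN_shift_prod n f g c :
  sumN n (fun i => (f i - c) * (g i - c))
  = sumN n (fun i => f i * g i) - c * sumN n f - c * sumN n g + INR n * c ^ 2.
Proof. induction n as [|n IH]; cbn [sumN]; [simpl; ring | rewrite IH, S_INR; ring]. Qed.

Lemma zorn_maximal (T : Type) (P : (T -> Prop) -> Prop) :
  (forall F : (T -> Prop) -> Prop, (forall X, F X -> P X) ->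
     (forall X Y, F X -> F Y -> (forall u, X u -> Y u) \/ (forall u, Y u -> X u)) ->
     P (fun u => exists X, F X /\ X u)) ->
  exists A, P A /\ forall B, (forall u, A u -> B u) -> P B -> forall u, B u -> A u.
Proof.
intros Hchain. destruct (@classical_sets.Zorn_bigcup T P) as [A [PA HA]].
- intros F FP Ftot.
  replace (classical_sets.bigcup F (fun X => X)) with (fun u => exists X, F X /\ X u).
  + apply Hchain; [exact FP|]. intros X Y FX FY. destruct (Ftot X Y FX FY); auto.
  + apply functional_extensionality; intros u. apply propositional_extensionality.
    split; [intros [X [FX Xu]]; exists X | intros [X FX Xu]; exists X; split]; auto.
- exists A. split; auto. intros B AB PB u Bu. apply NNPP. intros Au.
  apply (HA B); auto. split; auto.
Qed.
Section Qplexes.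
Variable d : nat.
Hypothesis d_ge2 : (2 <= d)%nat.

Local Notation N := (Ndim d).
Local Notation polar_bound := (1 / (dR d * (dR d + 1))).

Definition unitvec (k : nat) : vec := fun i => if Nat.eqb k i then 1 else 0.

Lemma dR_ge2 : 2 <= dR d.
Proof. unfold dR. apply le_INR in d_ge2. simpl in d_ge2. lra. Qed.

Lemma INR_Ndim : INR N = dR d * dR d.
Proof. apply mult_INR. Qed.

Lemma ip_sym u v : ip d u v = ip d v u.
Proof. apply sumN_ext; intros; ring. Qed.

Lemma ip_ext u u' v : (forall i, (i < N)%nat -> u i = u' i) -> ip d u v = ip d u' v.
Proof. intros E. apply sumN_ext. intros i Hi. rewrite E; auto. Qed.

Lemma ip_ones u : ip d u (fun _ => 1) = sumN N u.
Proof. apply sumN_ext; intros; ring. Qed.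

Lemma ip_unitvec u k : (k < N)%nat -> ip d u (unitvec k) = u k.
Proof.
intros Hk. rewrite <- (sumN_indicator N k u Hk). apply sumN_ext; intros; unfold unitvec; ring.
Qed.

Lemma dist2_ip u v :
  dist2 d u v = ip d (fun i => u i - v i) (fun i => u i - v i).
Proof. apply sumN_ext; intros; ring. Qed.

Lemma ip_cauchy_schwarz u v : ip d u v ^ 2 <= ip d u u * ip d v v.
Proof.
unfold ip.
replace (sumN N (fun i => u i * u i)) with (sumN N (fun i => u i ^ 2))
  by (apply sumN_ext; intros; ring).
replace (sumN N (fun i => v i * v i)) with (sumN N (fun i => v i ^ 2))
  by (apply sumN_ext; intros; ring).
apply sumN_cauchy_schwarz.
Qed.

Lemma dist2_nonneg u v : 0 <= dist2 d u v.
Proof. apply sumN_nonneg; intros; apply pow2_ge_0. Qed.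

Lemma ip_centered u v : inH d u -> inH d v ->
  ip d u v = 1 / (dR d * dR d)
             + ip d (fun i => u i - cpt d i) (fun i => v i - cpt d i).
Proof.
intros Hu Hv. pose proof dR_ge2.
unfold ip, cpt. rewrite sumN_shift_prod. unfold inH in Hu, Hv.
rewrite Hu, Hv, INR_Ndim. field. lra.
Qed.

Lemma dist2_cpt u : inH d u -> dist2 d u (cpt d) = ip d u u - 1 / (dR d * dR d).
Proof. intros Hu. rewrite dist2_ip, (ip_centered u u) by auto. ring. Qed.

Lemma ip_centered_sq_le u v : inH d u -> inH d v ->
  (ip d u v - 1 / (dR d * dR d)) ^ 2 <= dist2 d u (cpt d) * dist2 d v (cpt d).
Proof.
intros Hu Hv. rewrite (ip_centered u v), !dist2_ip by auto.
replace (1 / (dR d * dR d) + ip d _ _ - 1 / (dR d * dR d)) with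
  (ip d (fun i => u i - cpt d i) (fun i => v i - cpt d i)) by ring.
apply ip_cauchy_schwarz.
Qed.

Lemma ri2_ro2 : ri2 d * ro2 d = (1 / (dR d * dR d * (dR d + 1))) ^ 2.
Proof. pose proof dR_ge2. unfold ri2, ro2. field. split; nra. Qed.

Lemma ro2_pos : 0 < ro2 d.
Proof. pose proof dR_ge2. unfold ro2. apply Rdiv_lt_0_compat; nra. Qed.

Lemma ri2_pos : 0 < ri2 d.
Proof.
pose proof dR_ge2. assert (0 < dR d * dR d - 1) by nra.
unfold ri2. apply Rdiv_lt_0_compat; [lra | apply Rmult_lt_0_compat; nra].
Qed.

Lemma Bout_ip_le x p : Bout d x -> Bout d p -> ip d x p <= 2 / (dR d * (dR d + 1)).
Proof.
intros [Hx Dx] [Hp Dp]. pose proof dR_ge2. pose proof ro2_pos.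
pose proof (ip_centered_sq_le x p Hx Hp).
pose proof (dist2_nonneg x (cpt d)). pose proof (dist2_nonneg p (cpt d)).
replace (2 / (dR d * (dR d + 1))) with (1 / (dR d * dR d) + ro2 d)
  by (unfold ro2; field; lra).
nra.
Qed.

Lemma Bin_Bout_ip_ge b p : Bin d b -> Bout d p -> ip d b p >= polar_bound.
Proof.
intros [Hb Db] [Hp Dp]. pose proof dR_ge2.
pose proof (ip_centered_sq_le b p Hb Hp) as Hsq.
pose proof (dist2_nonneg b (cpt d)). pose proof (dist2_nonneg p (cpt d)).
assert (Hs : 0 < 1 / (dR d * dR d * (dR d + 1))) by (apply Rdiv_lt_0_compat; nra).
assert (Hsq' : (ip d b p - 1 / (dR d * dR d)) ^ 2 <= (1 / (dR d * dR d * (dR d + 1))) ^ 2).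
{ rewrite <- ri2_ro2. eapply Rle_trans; [exact Hsq|]. apply Rmult_le_compat; auto. }
replace polar_bound with (1 / (dR d * dR d) - 1 / (dR d * dR d * (dR d + 1)))
  by (field; lra).
nra.
Qed.

Lemma inH_ip_self_ge x : inH d x -> ip d x x >= polar_bound.
Proof.
intros Hx. pose proof dR_ge2. pose proof (dist2_nonneg x (cpt d)).
rewrite dist2_cpt in * by auto.
assert (polar_bound <= 1 / (dR d * dR d)).
{ unfold Rdiv. rewrite !Rmult_1_l. apply Rinv_le_contravar; nra. }
lra.
Qed.

Lemma Bin_Bout b : Bin d b -> Bout d b.
Proof.
intros [Hb Db]. pose proof dR_ge2. split; auto.
assert (ri2 d <= ro2 d); [|lra].
assert (E : ro2 d - ri2 d = (dR d - 2) / (dR d * (dR d - 1) * (dR d + 1)))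
  by (unfold ro2, ri2; field; split; nra).
assert (0 <= (dR d - 2) / (dR d * (dR d - 1) * (dR d + 1))); [|lra].
apply Rle_mult_inv_pos; nra.
Qed.

Lemma unitvec_inH k : (k < N)%nat -> inH d (unitvec k).
Proof. intros Hk. unfold inH. rewrite <- ip_ones, ip_sym, ip_unitvec; auto. Qed.

Lemma Bin_simplex b : Bin d b -> Simplex d b.
Proof.
intros [Hb Db]. pose proof dR_ge2. split; auto. intros k Hk.
pose proof (ip_centered_sq_le b (unitvec k) Hb (unitvec_inH k Hk)) as Hsq.
rewrite (dist2_cpt (unitvec k)), !ip_unitvec in Hsq by (auto; apply unitvec_inH; auto).
unfold unitvec at 1 in Hsq. rewrite Nat.eqb_refl in Hsq.
assert (Hc : 0 <= 1 - 1 / (dR d * dR d)).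
{ assert (1 / (dR d * dR d) <= 1); [|lra].
  apply (Rmult_le_reg_r (dR d * dR d)); [nra|]. field_simplify; nra. }
assert (Hsq' : (b k - 1 / (dR d * dR d)) ^ 2 <= (1 / (dR d * dR d)) ^ 2).
{ eapply Rle_trans; [exact Hsq|].
  replace ((1 / (dR d * dR d)) ^ 2) with (ri2 d * (1 - 1 / (dR d * dR d)))
    by (unfold ri2; field; split; nra).
  apply Rmult_le_compat_r; auto. }
assert (0 < 1 / (dR d * dR d)) by (apply Rdiv_lt_0_compat; nra).
nra.
Qed.

Lemma ip_ebasis u k : (k < N)%nat ->
  ip d u (ebasis d k) = / (dR d + 1) * (u k + / dR d * sumN N u).
Proof.
intros Hk. rewrite <- (ip_unitvec u k Hk).
unfold ip, ebasis, unitvec.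
rewrite (sumN_ext _ _ (fun i => / (dR d + 1) * (u i * (if Nat.eqb k i then 1 else 0))
                                + (/ (dR d + 1) * / dR d) * u i))
  by (intros; ring).
rewrite sumN_lin. ring.
Qed.

Lemma ebasis_inH k : (k < N)%nat -> inH d (ebasis d k).
Proof.
intros Hk. pose proof dR_ge2. unfold inH.
rewrite <- ip_ones, ip_sym, ip_ebasis, sumN_const, INR_Ndim by auto. field. lra.
Qed.

Lemma ebasis_simplex k : (k < N)%nat -> Simplex d (ebasis d k).
Proof.
intros Hk. pose proof dR_ge2. split; [|apply ebasis_inH; auto].
intros i _. unfold ebasis. apply Rmult_le_pos; [left; apply Rinv_0_lt_compat; lra|].
assert (0 < / dR d) by (apply Rinv_0_lt_compat; lra). destruct (Nat.eqb k i); lra.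
Qed.

Lemma ebasis_Bout k : (k < N)%nat -> Bout d (ebasis d k).
Proof.
intros Hk. pose proof dR_ge2. pose proof (ebasis_inH k Hk) as He. split; auto.
rewrite dist2_cpt, ip_ebasis, He by auto.
unfold ebasis. rewrite Nat.eqb_refl. unfold ro2. right. field. lra.
Qed.

Lemma simplex_ebasis_ip_ge k p : (k < N)%nat -> Simplex d p ->
  ip d (ebasis d k) p >= polar_bound.
Proof.
intros Hk [Hp Hs]. pose proof dR_ge2. pose proof (Hp k Hk).
rewrite ip_sym, ip_ebasis by auto. unfold inH in Hs. rewrite Hs.
replace polar_bound with (/ (dR d + 1) * (0 + / dR d * 1)) by (field; lra).
apply Rle_ge, Rmult_le_compat_l; [left; apply Rinv_0_lt_compat; lra | lra].
Qed.

Lemma basisvec_simplex x : isBasisVec d x -> Simplex d x.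
Proof.
intros [k [Hk E]]. destruct (ebasis_simplex k Hk) as [Hp Hs]. split.
- intros i Hi. rewrite E; auto.
- unfold inH in *. rewrite <- Hs. apply sumN_ext; auto.
Qed.

Lemma basisvec_ip_ge x p : isBasisVec d x -> Simplex d p -> ip d x p >= polar_bound.
Proof.
intros [k [Hk E]] Hp. rewrite (ip_ext x (ebasis d k)) by auto.
apply simplex_ebasis_ip_ge; auto.
Qed.

Lemma polar_ebasis_simplex v : inH d v ->
  (forall k, (k < N)%nat -> ip d v (ebasis d k) >= polar_bound) -> Simplex d v.
Proof.
intros Hv Hpol. pose proof dR_ge2. split; auto. intros i Hi.
specialize (Hpol i Hi). rewrite ip_ebasis in Hpol by auto. unfold inH in Hv. rewrite Hv in Hpol.
replace polar_bound with (/ (dR d + 1) * (/ dR d * 1)) in Hpol by (field; lra).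
apply Rge_le, Rmult_le_reg_l in Hpol; [lra | apply Rinv_0_lt_compat; lra].
Qed.

(* The witness is the point of the in-sphere diametrically opposite to [v]. *)
Lemma polar_Bin_Bout v : inH d v ->
  (forall b, Bin d b -> ip d v b >= polar_bound) -> Bout d v.
Proof.
intros Hv Hpol. pose proof dR_ge2. split; auto.
pose proof (dist2_nonneg v (cpt d)) as HD. set (D := dist2 d v (cpt d)) in *.
destruct (Req_dec D 0) as [HD0|HD0]; [pose proof ro2_pos; lra|].
pose proof ri2_pos as Hri.
set (mu := sqrt (ri2 d / D)).
assert (Hmu : mu * mu = ri2 d / D)
  by (apply sqrt_sqrt; left; apply Rdiv_lt_0_compat; lra).
assert (Hmu0 : 0 <= mu) by apply sqrt_pos.
set (b := fun i => cpt d i - mu * (v i - cpt d i)).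
assert (Hbc : forall w, ip d w (fun i => b i - cpt d i)
                        = - mu * ip d w (fun i => v i - cpt d i)).
{ intros w. unfold ip. rewrite <- sumN_scal. apply sumN_ext. intros; unfold b; ring. }
assert (Hb : inH d b).
{ unfold inH, b, cpt. rewrite sumN_minus, sumN_scal, sumN_minus, !sumN_const, INR_Ndim.
  unfold inH in Hv. rewrite Hv. field. lra. }
assert (HbB : Bin d b).
{ split; auto. rewrite dist2_ip, Hbc, ip_sym, Hbc, <- dist2_ip. fold D.
  right. replace (- mu * (- mu * D)) with (mu * mu * D) by ring. rewrite Hmu. field. auto. }
specialize (Hpol b HbB).
rewrite ip_centered, Hbc, <- dist2_ip in Hpol by auto. fold D in Hpol.
assert (Hs : mu * D <= 1 / (dR d * dR d * (dR d + 1))).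
{ replace polar_bound with (1 / (dR d * dR d) - 1 / (dR d * dR d * (dR d + 1))) in Hpol
    by (field; lra). lra. }
assert (Hsq : mu * mu * D * D <= (1 / (dR d * dR d * (dR d + 1))) ^ 2).
{ replace (mu * mu * D * D) with ((mu * D) ^ 2) by ring.
  apply pow_incr. split; [apply Rmult_le_pos|]; lra. }
rewrite Hmu, <- ri2_ro2 in Hsq.
replace (ri2 d / D * D * D) with (ri2 d * D) in Hsq by (field; auto).
apply (Rmult_le_reg_l (ri2 d)); auto.
Qed.

Lemma ip_sub_l u w v : ip d (fun i => u i - w i) v = ip d u v - ip d w v.
Proof. unfold ip. rewrite <- sumN_minus. apply sumN_ext; intros; ring. Qed.

Lemma ip_sub_r u v w : ip d u (fun i => v i - w i) = ip d u v - ip d u w.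
Proof. rewrite ip_sym, ip_sub_l, !(ip_sym _ u). reflexivity. Qed.

Lemma ip_scal_r u a v : ip d u (fun i => a * v i) = a * ip d u v.
Proof. unfold ip. rewrite <- sumN_scal. apply sumN_ext; intros; ring. Qed.

Lemma ip_cpt u : ip d u (cpt d) = 1 / (dR d * dR d) * sumN N u.
Proof.
unfold ip, cpt. rewrite <- sumN_scal. apply sumN_ext; intros; ring.
Qed.

Lemma ip_opp_ones u : ip d u (fun _ => -1) = - sumN N u.
Proof.
unfold ip. rewrite (sumN_ext _ _ (fun i => -1 * u i)) by (intros; ring).
rewrite sumN_scal. ring.
Qed.

Lemma conv_incl A : subset A (conv d A).
Proof.
intros u Hu. exists 1%nat, (fun _ => u), (fun _ => 1).
split; [intros; split; auto; lra | split; [simpl; ring | intros; simpl; ring]].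
Qed.

Lemma closure_incl P : subset P (closure d P).
Proof.
intros u Hu eps Heps. exists u. split; auto.
unfold dist2. rewrite (sumN_ext _ _ (fun _ => 0)), sumN_const by (intros; ring). lra.
Qed.

Lemma clconv_incl A : subset A (clconv d A).
Proof. intros u Hu. apply closure_incl, conv_incl, Hu. Qed.

Lemma clconv_mono A B : subset A B -> subset (clconv d A) (clconv d B).
Proof.
intros AB u Hu eps Heps. destruct (Hu eps Heps) as [w [[n [x [lam [Hx Hw]]]] Dw]].
exists w. split; auto. exists n, x, lam. split; auto.
intros j Hj. destruct (Hx j Hj). auto.
Qed.

Lemma conv_halfspace A v r : (forall x, A x -> ip d x v >= r) ->
  forall u, conv d A u -> ip d u v >= r.
Proof.
intros HA u [n [x [lam [Hx [Hlam Hu]]]]].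
rewrite (ip_ext u (fun i => sumN n (fun j => lam j * x j i))) by auto.
unfold ip at 1. rewrite (sumN_ext _ _ (fun i => sumN n (fun j => lam j * (x j i * v i))))
  by (intros; rewrite Rmult_comm, <- sumN_scal; apply sumN_ext; intros; ring).
rewrite sumN_swap, <- (Rmult_1_l r), <- Hlam, Rmult_comm, <- sumN_scal.
apply Rle_ge, sumN_le. intros j Hj. destruct (Hx j Hj) as [Ax Hl].
rewrite sumN_scal. specialize (HA _ Ax). unfold ip in HA. nra.
Qed.

Lemma closure_halfspace P v r : (forall w, P w -> ip d w v >= r) ->
  forall u, closure d P u -> ip d u v >= r.
Proof.
intros HP u Hu. apply Rnot_lt_ge. intros Hlt.
set (de := r - ip d u v). set (V := ip d v v).
assert (HV : 0 <= V) by (apply sumN_nonneg; intros; apply Rle_0_sqr).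
assert (Hde : 0 < de) by (unfold de; lra).
destruct (Hu (de ^ 2 / (V + 1))) as [w [Pw Dw]]; [apply Rdiv_lt_0_compat; nra|].
pose proof (ip_cauchy_schwarz (fun i => u i - w i) v) as Hcs.
rewrite ip_sub_l, <- dist2_ip in Hcs. fold V in Hcs.
specialize (HP w Pw).
assert (de ^ 2 <= dist2 d u w * V) by (unfold de in *; nra).
assert (dist2 d u w * V <= de ^ 2 / (V + 1) * V) by (apply Rmult_le_compat_r; lra).
assert (de ^ 2 / (V + 1) * V < de ^ 2).
{ apply (Rmult_lt_reg_r (V + 1)); [lra|].
  replace (de ^ 2 / (V + 1) * V * (V + 1)) with (de ^ 2 * V) by (field; lra). nra. }
lra.
Qed.

Lemma clconv_halfspace A v r : (forall x, A x -> ip d x v >= r) ->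
  forall u, clconv d A u -> ip d u v >= r.
Proof. intros HA. apply closure_halfspace, conv_halfspace, HA. Qed.

Lemma clconv_inH A : subset A (inH d) -> subset (clconv d A) (inH d).
Proof.
intros HA u Hu. unfold inH.
assert (ip d u (fun _ => 1) >= 1 /\ ip d u (fun _ => -1) >= -1) as [H1 H2].
{ split; apply (clconv_halfspace A); auto; intros x Ax; specialize (HA x Ax); unfold inH in HA;
    [rewrite ip_ones | rewrite ip_opp_ones]; lra. }
rewrite ip_ones in H1. rewrite ip_opp_ones in H2. lra.
Qed.

Lemma conv_simplex A : subset A (Simplex d) -> subset (conv d A) (Simplex d).
Proof.
intros HA u Hu. split.
- intros i Hi. rewrite <- (ip_unitvec u i Hi). apply Rge_le.
  apply (conv_halfspace A); auto. intros x Ax. rewrite ip_unitvec by auto.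
  apply Rle_ge, (HA x Ax); auto.
- apply (clconv_inH A); [intros x Ax; apply HA, Ax | apply closure_incl, Hu].
Qed.

Lemma polar_clconv A B : subset A (polar d B) -> subset (clconv d A) (polar d B).
Proof.
intros HA u Hu. split.
- apply (clconv_inH A); auto. intros x Ax. apply HA, Ax.
- intros v Bv. apply (clconv_halfspace A); auto. intros x Ax. apply (HA x Ax), Bv.
Qed.

Lemma conv_comb2 A x y t : 0 <= t <= 1 -> conv d A x -> conv d A y ->
  conv d A (fun i => (1 - t) * x i + t * y i).
Proof.
intros Ht [n1 [x1 [l1 [A1 [B1 C1]]]]] [n2 [x2 [l2 [A2 [B2 C2]]]]].
exists (n1 + n2)%nat, (fun j => if Nat.ltb j n1 then x1 j else x2 (j - n1)%nat),
  (fun j => if Nat.ltb j n1 then (1 - t) * l1 j else t * l2 (j - n1)%nat).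
assert (Lo : forall j, (j < n1)%nat -> Nat.ltb j n1 = true) by (intros; apply Nat.ltb_lt; lia).
assert (Hi : forall j, Nat.ltb (n1 + j) n1 = false) by (intros; apply Nat.ltb_ge; lia).
assert (Sh : forall j, (n1 + j - n1 = j)%nat) by (intros; lia).
split; [|split].
- intros j Hj. destruct (Nat.ltb j n1) eqn:E.
  + apply Nat.ltb_lt in E. destruct (A1 j E). split; auto. nra.
  + apply Nat.ltb_ge in E. destruct (A2 (j - n1)%nat) as [P Q]; [lia|]. split; auto. nra.
- rewrite sumN_split, (sumN_ext n1 _ (fun j => (1 - t) * l1 j)),
    (sumN_ext n2 _ (fun j => t * l2 j)), !sumN_scal, B1, B2 by
    (intros; rewrite ?Hi, ?Sh, ?Lo; auto). ring.
- intros i Hi'. rewrite C1, C2, sumN_split, <- !sumN_scal by auto.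
  f_equal; apply sumN_ext; intros j Hj; rewrite ?Hi, ?Sh, ?Lo by auto; ring.
Qed.

Lemma germ_simplex_Bout A p : germ d A -> A p -> Simplex d p /\ Bout d p.
Proof.
intros [HS Hip] Ap. pose proof dR_ge2. pose proof (HS p Ap) as Sp.
split; auto. split; [apply Sp|].
rewrite dist2_cpt by apply Sp. destruct (Hip p p Ap Ap) as [_ Hle].
replace (ro2 d) with (2 / (dR d * (dR d + 1)) - 1 / (dR d * dR d)) by (unfold ro2; field; lra).
lra.
Qed.

Lemma germ_mono A B : subset B A -> germ d A -> germ d B.
Proof. intros BA [HS Hip]. split; [intros u Bu; apply HS, BA, Bu | intros; apply Hip; auto]. Qed.

Lemma germ_add A x : germ d A -> Simplex d x -> Bout d x ->
  (forall p, A p -> ip d x p >= polar_bound) -> germ d (fun y => A y \/ y = x).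
Proof.
intros HA Sx Bx Hx. split; [intros y [Ay | ->]; auto; apply HA, Ay|].
intros p s [Ap | ->] [As | ->].
- apply HA; auto.
- rewrite ip_sym. split; [apply Rge_le, Hx, Ap|].
  apply Bout_ip_le; auto. apply (germ_simplex_Bout A), Ap; auto.
- split; [apply Rge_le, Hx, As|].
  apply Bout_ip_le; auto. apply (germ_simplex_Bout A), As; auto.
- split; [apply Rge_le, inH_ip_self_ge, Sx | apply Bout_ip_le; auto].
Qed.

Definition maximal_germ (M : rset) : Prop :=
  germ d M /\ forall x, germ d (fun y => M y \/ y = x) -> M x.

Lemma exists_maximal_germ G : germ d G -> exists M, maximal_germ M /\ subset G M.
Proof.
intros HG. destruct (zorn_maximal vec (fun X => germ d (union X G))) as [A [HA Amax]].
- intros F FP Ftot. split.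
  + intros u [[X [FX Xu]] | Gu]; [apply (FP X FX); left | apply HG]; auto.
  + intros p s [[X [FX Xp]] | Gp] [[Y [FY Ys]] | Gs].
    * destruct (Ftot X Y FX FY) as [XY | YX];
        [apply (FP Y FY) | apply (FP X FX)]; left; auto.
    * apply (FP X FX); [left | right]; auto.
    * apply (FP Y FY); [right | left]; auto.
    * apply HG; auto.
- exists (union A G). split; [split; auto|intros u Gu; right; auto].
  intros x Hx. left. apply (Amax (fun u => A u \/ u = x)); auto.
  apply (germ_mono (fun y => union A G y \/ y = x)); auto.
  intros y [[Ay | ->] | Gy]; unfold union; auto.
Qed.

Lemma maximal_germ_qplex M : maximal_germ M -> qplex d M.
Proof.
intros [HM Mmax]. split; [intros u Mu; apply (germ_simplex_Bout M); auto|].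
intros u. split.
- intros [Hu Hpol].
  assert (Hsimplex : Simplex d u).
  { apply polar_ebasis_simplex; auto. intros k Hk. apply Hpol, Mmax.
    apply germ_add; auto using ebasis_simplex, ebasis_Bout.
    intros p Mp. apply simplex_ebasis_ip_ge; auto. apply (germ_simplex_Bout M); auto. }
  assert (HBout : Bout d u).
  { apply polar_Bin_Bout; auto. intros b Hb. apply Hpol, Mmax.
    apply germ_add; auto using Bin_simplex, Bin_Bout.
    intros p Mp. apply Bin_Bout_ip_ge; auto. apply (germ_simplex_Bout M); auto. }
  apply Mmax, germ_add; auto.
- intros Mu. split; [apply (germ_simplex_Bout M); auto|].
  intros v Mv. apply Rle_ge, HM; auto.
Qed.

Lemma exists_qplex G : germ d G -> exists Q, qplex d Q /\ subset G Q.
Proof.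
intros HG. destruct (exists_maximal_germ G HG) as [M [HM GM]].
exists M. split; auto. apply maximal_germ_qplex, HM.
Qed.

Lemma exists_qplex_through G x : germ d G -> Simplex d x -> Bout d x -> polar d G x ->
  exists Q, qplex d Q /\ subset G Q /\ Q x.
Proof.
intros HG Sx Bx [_ Hx].
destruct (exists_qplex (fun y => G y \/ y = x)) as [Q [HQ GQ]].
- apply germ_add; auto.
- exists Q. split; [|split]; auto. intros u Gu. apply GQ; auto.
Qed.

Lemma qplex_ip_ge Q u v : qplex d Q -> Q u -> Q v -> ip d u v >= polar_bound.
Proof. intros [_ HQ] Qu Qv. apply HQ in Qu. apply Qu, Qv. Qed.

Lemma qplex_simplex Q u : qplex d Q -> Q u -> Simplex d u.
Proof. intros [HQ _] Qu. apply HQ, Qu. Qed.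

Lemma qplex_clconv Q A : qplex d Q -> subset A Q -> subset (clconv d A) Q.
Proof.
intros HQ AQ u Hu. apply HQ. apply (polar_clconv A); auto.
intros x Ax. apply HQ, AQ, Ax.
Qed.

Lemma qplex_stem_generators Q G : qplex d Q -> subset G Q ->
  subset (union (union (BasisSimplex d) (Bin d)) G) Q.
Proof.
intros HQ GQ u [[Hu | Hu] | Hu]; auto.
- apply (qplex_clconv Q (isBasisVec d)); [auto | | apply closure_incl, Hu].
  intros x Hx. apply HQ. split; [apply basisvec_simplex, Hx|].
  intros p Qp. apply basisvec_ip_ge; auto. apply (qplex_simplex Q); auto.
- apply HQ. split; [apply Hu|]. intros p Qp.
  apply Bin_Bout_ip_ge; auto. apply HQ, Qp.
Qed.

Lemma dist2_infimum P u : (exists w, P w) -> ~ closure d P u ->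
  exists de, 0 < de /\ (forall w, P w -> dist2 d u w >= de) /\
    forall eta, 0 < eta -> exists w, P w /\ dist2 d u w < de + eta.
Proof.
intros [w1 Pw1] Hu.
assert (Heps : exists eps, 0 < eps /\ forall w, P w -> dist2 d u w >= eps).
{ apply NNPP. intros Hn. apply Hu. intros eps He. apply NNPP. intros Hw. apply Hn.
  exists eps. split; auto. intros w Pw. apply Rnot_lt_ge. intros Hlt. apply Hw. exists w; auto. }
destruct Heps as [eps [He Heps]].
set (E := fun r => exists w, P w /\ r = - dist2 d u w).
destruct (completeness E) as [m [Hub Hlub]].
- exists (- eps). intros r [w [Pw ->]]. specialize (Heps w Pw). lra.
- exists (- dist2 d u w1). exists w1; auto.
- assert (Hm : m <= - eps).
  { apply Hlub. intros r [w [Pw ->]]. specialize (Heps w Pw). lra. }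
  exists (- m). split; [lra | split].
  + intros w Pw. assert (- dist2 d u w <= m) by (apply Hub; exists w; auto). lra.
  + intros eta Heta. apply NNPP. intros Hn.
    assert (m <= m - eta); [|lra].
    apply Hlub. intros r [w [Pw ->]]. apply Rnot_lt_le. intros Hlt. apply Hn. exists w. split; auto. lra.
Qed.

Lemma simplex_dist2_le w w' : Simplex d w -> Simplex d w' -> dist2 d w w' <= 4.
Proof.
intros [Hw Sw] [Hw' Sw']. unfold inH in Sw, Sw'. apply (Rle_trans _ (sumN N (fun i => w i + w' i) ^ 2)).
- eapply Rle_trans; [apply (sumN_le _ _ (fun i => (w i + w' i) ^ 2)) | apply sumN_sq_le_sq];
    intros i Hi; specialize (Hw i Hi); specialize (Hw' i Hi); nra.
- rewrite sumN_plus, Sw, Sw'. lra.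
Qed.

Lemma dist2_segment u w0 w t :
  dist2 d u (fun i => (1 - t) * w0 i + t * w i)
  = dist2 d u w0 - 2 * t * ip d (fun i => u i - w0 i) (fun i => w i - w0 i)
    + t ^ 2 * dist2 d w w0.
Proof. unfold dist2, ip. induction N as [|n IH]; cbn [sumN]; [ring | rewrite IH; ring]. Qed.

(* If [w0] is almost the point of [conv A] closest to [u], the angle at [w0]
   between [u] and any [w] of [conv A] is almost obtuse; the bound [dist2 <= 4]
   on the simplex makes "almost" uniform. *)
Lemma near_closest_point_ip A u de w0 : subset A (Simplex d) ->
  (forall w, conv d A w -> dist2 d u w >= de) -> 0 < de -> conv d A w0 ->
  dist2 d u w0 < de + de ^ 2 / (2 * (8 + de)) ->
  forall w, conv d A w -> ip d (fun i => u i - w0 i) (fun i => w i - w0 i) < de / 2.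
Proof.
intros HA Hde Hde0 Hw0 Dw0 w Hw.
set (t := de / (8 + de)).
assert (Ht : 0 < t) by (apply Rdiv_lt_0_compat; lra).
assert (Hteq : t * (8 + de) = de) by (unfold t; field; lra).
assert (Ht8 : 8 * t <= de) by nra.
assert (Ht1 : t <= 1) by nra.
pose proof (Hde _ (conv_comb2 A w0 w t ltac:(lra) Hw0 Hw)) as Hseg.
rewrite dist2_segment in Hseg.
pose proof (simplex_dist2_le w w0 (conv_simplex A HA w Hw) (conv_simplex A HA w0 Hw0)).
replace (de ^ 2 / (2 * (8 + de))) with (t * de / 2) in Dw0 by (unfold t; field; lra).
set (AB := ip d (fun i => u i - w0 i) (fun i => w i - w0 i)) in *.
assert (2 * t * AB < t * (de / 2 + 4 * t)) by nra.
assert (AB < de / 4 + 2 * t) by nra.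
lra.
Qed.

Lemma conv_separation A u : subset A (Simplex d) -> inH d u ->
  (exists w, conv d A w) -> ~ clconv d A u ->
  exists a beta, sumN N a = 0 /\ (forall w, conv d A w -> ip d a w <= beta) /\ beta < ip d a u.
Proof.
intros HA Hu Hne Hnu.
destruct (dist2_infimum (conv d A) u Hne Hnu) as [de [Hde0 [Hde Hnear]]].
destruct (Hnear (de ^ 2 / (2 * (8 + de)))) as [w0 [Hw0 Dw0]];
  [apply Rdiv_lt_0_compat; nra|].
destruct (conv_simplex A HA w0 Hw0) as [_ Sw0].
set (a := fun i => u i - w0 i).
exists a, (ip d a w0 + de / 2). split; [|split].
- unfold a, inH in *. rewrite sumN_minus, Hu, Sw0. ring.
- intros w Hw. pose proof (near_closest_point_ip A u de w0 HA Hde Hde0 Hw0 Dw0 w Hw) as Hobtuse.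
  fold a in Hobtuse. rewrite ip_sub_r in Hobtuse. lra.
- pose proof (Hde w0 Hw0) as Hfar. rewrite dist2_ip, ip_sub_r in Hfar. fold a in Hfar. lra.
Qed.

Lemma cpt_Bin : Bin d (cpt d).
Proof.
pose proof dR_ge2. pose proof ri2_pos. split.
- unfold inH, cpt. rewrite sumN_const, INR_Ndim. field. lra.
- unfold dist2. rewrite (sumN_ext _ _ (fun _ => 0)), sumN_const by (intros; ring). lra.
Qed.

(* A hyperplane through [cpt] separating [u] from [conv A] is tilted around
   [cpt] until it becomes the polar hyperplane of some [v]. *)
Lemma polar_separation A u : subset A (Simplex d) -> A (cpt d) -> inH d u ->
  ~ clconv d A u -> exists v, polar d A v /\ ip d v u < polar_bound.
Proof.
intros HA Ac Hu Hnu. pose proof dR_ge2.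
destruct (conv_separation A u HA Hu (ex_intro _ _ (conv_incl A _ Ac)) Hnu)
  as [a [beta [Sa [Hle Hlt]]]].
assert (Hbeta : 0 <= beta).
{ specialize (Hle _ (conv_incl A _ Ac)). rewrite ip_cpt, Sa in Hle. lra. }
set (s := 1 / (dR d * dR d * (dR d + 1))).
assert (Hs : 0 < s) by (apply Rdiv_lt_0_compat; nra).
set (lam := 2 * s / (beta + ip d a u)).
assert (Hlam : 0 < lam) by (apply Rdiv_lt_0_compat; lra).
assert (Hlam_beta : lam * beta < s).
{ apply (Rmult_lt_reg_r (beta + ip d a u)); [lra|].
  unfold lam. replace (2 * s / (beta + ip d a u) * beta * (beta + ip d a u)) with (2 * s * beta)
    by (field; lra). nra. }
assert (Hlam_u : s < lam * ip d a u).
{ apply (Rmult_lt_reg_r (beta + ip d a u)); [lra|].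
  unfold lam. replace (2 * s / (beta + ip d a u) * ip d a u * (beta + ip d a u))
    with (2 * s * ip d a u) by (field; lra). nra. }
set (v := fun i => cpt d i - lam * a i).
assert (Hv : forall w, inH d w -> ip d v w = 1 / (dR d * dR d) - lam * ip d a w).
{ intros w Hw. unfold v. rewrite ip_sym, ip_sub_r, ip_scal_r, ip_cpt, (ip_sym w a), Hw. ring. }
assert (Hbound : polar_bound = 1 / (dR d * dR d) - s) by (unfold s; field; lra).
exists v. split; [split|].
- unfold inH, v. rewrite sumN_minus, sumN_scal, Sa.
  unfold cpt. rewrite sumN_const, INR_Ndim. field. lra.
- intros w Aw. destruct (HA w Aw) as [_ Hw]. rewrite Hv, Hbound by auto.
  specialize (Hle w (conv_incl A w Aw)).
  assert (lam * ip d a w <= lam * beta) by (apply Rmult_le_compat_l; lra).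
  lra.
- rewrite Hv, Hbound by auto. lra.
Qed.

Lemma polar_antimono A B : subset A B -> subset (polar d B) (polar d A).
Proof. intros AB u [Hu Hpol]. split; auto. Qed.

Lemma polar_stem_generators G v :
  polar d (union (union (BasisSimplex d) (Bin d)) G) v ->
  Simplex d v /\ Bout d v /\ polar d G v.
Proof.
intros [Hv Hpol]. split; [|split].
- apply polar_ebasis_simplex; auto. intros k Hk.
  apply Hpol. left; left. apply conv_incl. exists k. split; auto.
- apply polar_Bin_Bout; auto. intros b Hb. apply Hpol. left; right; auto.
- split; auto. intros g Hg. apply Hpol. right; auto.
Qed.

Lemma stem_generators_simplex G : germ d G ->
  subset (union (union (BasisSimplex d) (Bin d)) G) (Simplex d).
Proof.
intros HG u [[Hu | Hu] | Hu].
- apply (conv_simplex (isBasisVec d)); auto. intros x Hx. apply basisvec_simplex, Hx.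
- apply Bin_simplex, Hu.
- apply HG, Hu.
Qed.

Section Stem.
Variable G : rset.
Hypothesis HG : germ d G.

Local Notation generators := (union (union (BasisSimplex d) (Bin d)) G).

Lemma envelope_eq : seteq (envelope d G) (fun u => Simplex d u /\ Bout d u /\ polar d G u).
Proof.
intros u. split.
- intros [Q [HQ [GQ Qu]]]. destruct (proj1 HQ u Qu) as [Su Bu].
  split; [|split]; auto. split; [apply Su|]. intros g Gg. apply (qplex_ip_ge Q); auto.
- intros [Su [Bu Pu]]. destruct (exists_qplex_through G u HG Su Bu Pu) as [Q HQ].
  exists Q; auto.
Qed.

Lemma envelope_cuts_off u : inH d u -> ~ clconv d generators u ->
  exists v, envelope d G v /\ ip d v u < polar_bound.
Proof.
intros Hu Hnu.
destruct (polar_separation generators u (stem_generators_simplex G HG)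
            (or_introl (or_intror cpt_Bin)) Hu Hnu) as [v [Pv Hv]].
exists v. split; auto. apply envelope_eq, polar_stem_generators, Pv.
Qed.

Lemma stem_inH u : stem d G u -> inH d u.
Proof.
intros Su. destruct (exists_qplex G HG) as [Q [HQ GQ]].
apply (qplex_simplex Q u HQ (Su Q HQ GQ)).
Qed.

Lemma stem_eq : seteq (stem d G) (clconv d generators).
Proof.
intros u. split.
- intros Su. apply NNPP. intros Hnu.
  destruct (envelope_cuts_off u (stem_inH u Su) Hnu) as [v [[Q [HQ [GQ Qv]]] Hv]].
  pose proof (qplex_ip_ge Q v u HQ Qv (Su Q HQ GQ)). lra.
- intros Hu Q HQ GQ. apply (qplex_clconv Q generators); auto.
  apply qplex_stem_generators; auto.
Qed.

Lemma polar_stem_eq : seteq (polar d (stem d G)) (envelope d G).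
Proof.
intros v. split.
- intros Pv. apply envelope_eq, polar_stem_generators.
  apply (polar_antimono _ (stem d G)); auto. intros w Hw. apply stem_eq, clconv_incl, Hw.
- intros [Q [HQ [GQ Qv]]]. split; [apply (qplex_simplex Q v HQ Qv)|].
  intros u Su. apply (qplex_ip_ge Q); auto. apply Su; auto.
Qed.

Lemma polar_envelope_eq : seteq (polar d (envelope d G)) (stem d G).
Proof.
intros u. split.
- intros [Hu Pu]. apply stem_eq. apply NNPP. intros Hnu.
  destruct (envelope_cuts_off u Hu Hnu) as [v [Ev Hv]].
  specialize (Pu v Ev). rewrite ip_sym in Pu. lra.
- intros Su. split; [apply stem_inH, Su|].
  intros v [Q [HQ [GQ Qv]]]. apply (qplex_ip_ge Q); auto. apply Su; auto.
Qed.

End Stem.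

End Qplexes.

Lemma germ_emptyset d : germ d emptyset.
Proof. split; [intros u [] | intros p s []]. Qed.

Theorem mainTheorem4 (d : nat) (G : rset) :
  (2 <= d)%nat -> germ d G ->
  (exists Q, qplex d Q /\ subset G Q) /\
  seteq (stem d G)
        (clconv d (union (union (BasisSimplex d) (Bin d)) G)) /\
  seteq (envelope d G)
        (fun u => Simplex d u /\ Bout d u /\ polar d G u) /\
  seteq (polar d (stem d G)) (envelope d G) /\
  seteq (polar d (envelope d G)) (stem d G) /\
  seteq (stem d (emptyset)) (clconv d (union (BasisSimplex d) (Bin d))) /\
  seteq (envelope d (emptyset)) (fun u => Simplex d u /\ Bout d u).
Proof.
intros Hd HG. pose proof (germ_emptyset d) as H0.
split; [apply exists_qplex; auto|].
split; [apply stem_eq; auto|].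
split; [apply envelope_eq; auto|].
split; [apply polar_stem_eq; auto|].
split; [apply polar_envelope_eq; auto|].
split; intros u.
- rewrite (stem_eq d Hd emptyset H0 u).
  split; apply clconv_mono; intros w; unfold union, emptyset; tauto.
- rewrite (envelope_eq d Hd emptyset H0 u).
  split; [tauto|]. intros [Su Bu]. split; [exact Su | split; [exact Bu | split; [apply Su | intros v []]]].
Qed.
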